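(* Let $H=\sum_{(i,j)\in E}h_{i,j}$ be a $2$-local Hamiltonian on $n$ qubits, where each $h_{i,j}$ is Hermitian and acts nontrivially only on qubits $i,j$, and for each pair $\{i,j\}$ there is at most one term $h_{i,j}$. For each $i\in[n]$ let $\eta_i>0$, $\kappa_i\ge 0$ be parameters, and let $\mathcal P_i$ be either the identity superoperator on qubit $i$ or the pinching superoperator $\mathcal P_{R_i}$ of some Hermitian one-qubit operator $R_i$ acting on qubit $i$. Suppose that for each $i$ such that $\mathcal P_i$ is not the identity, $\Delta(R_i)\ge\eta_i$ and for all $j$ with $(i,j)\in E$, $\|[R_i\otimes I_j,h_{i,j}]\|\le\kappa_i$. Define $h'_{i,j}=(\mathcal P_i\otimes\mathcal P_j\otimes \mathrm{id}_{[n]\setminus\{i,j\}})(h_{i,j})$ and $H'=\sum_{(i,j)\in E}h'_{i,j}$. Then: 1. For every $i$ such that $\mathcal P_i$ is not the identity, all the terms $h'_{i,j}$ acting on qubit $i$ commute with each other and with $R_i$. 2. For all $(i,j)\in E$, $\|h'_{i,j}-h_{i,j}\|\le 4\left(\frac{\kappa_i}{\eta_i}+\frac{\kappa_j}{\eta_j}\right)$.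
   Context: For a Hermitian $A\in\mathbb C^{2\times 2}$ with spectral decomposition $A=\lambda_{\min}(A)\Pi+\lambda_{\max}(A)(I-\Pi)$, the spectral gap is $\Delta(A)=\lambda_{\max}(A)-\lambda_{\min}(A)$, and the pinching superoperator is $\mathcal P_A(X)=\Pi X\Pi+(I-\Pi)X(I-\Pi)$ for $X\in\mathbb C^{2\times2}$ (applied on the corresponding qubit tensor factor). $\|\cdot\|$ is the operator norm and $[A,B]=AB-BA$. *)

From HB Require Import structures.
From mathcomp Require Import all_boot all_order all_algebra.
From mathcomp Require Import complex.
From mathcomp Require Import classical_sets reals.
Set Implicit Arguments. Unset Strict Implicit. Unset Printing Implicit Defensive.
Import Order.TTheory GRing.Theory Num.Theory.
Local Open Scope ring_scope.
Local Open Scope classical_set_scope.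

Section QubitDefs.
Variable R : realType.
Local Notation C := R[i].

Definition basis (n : nat) := {ffun 'I_n -> bool}.
Definition dimq (n : nat) : nat := #|{: basis n}|.
(* operators on the n-qubit space C^(2^n), rows/columns indexed by basis states *)
Definition op (n : nat) := 'M[C]_(dimq n).
Definition cfg (n : nat) (a : 'I_(dimq n)) : basis n := enum_val a.

Definition b2o (b : bool) : 'I_2 := inord b.

Definition cabs (z : C) : R := Num.sqrt (complex.Re z ^+ 2 + complex.Im z ^+ 2).
Definition vnorm (m : nat) (v : 'cV[C]_m) : R :=
  Num.sqrt (\sum_k cabs (v k 0) ^+ 2).
Definition opnorm (m : nat) (A : 'M[C]_m) : R :=
  sup [set vnorm (A *m v) | v in [set v : 'cV[C]_m | vnorm v <= 1]].

Definition adjmx (m : nat) (A : 'M[C]_m) : 'M[C]_m := (map_mx (@conjc R) A)^T.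
Definition is_hermitian (m : nat) (A : 'M[C]_m) : Prop := adjmx A = A.
Definition commutator (m : nat) (A B : 'M[C]_m) : 'M[C]_m := A *m B - B *m A.

(* X acting on qubit i, tensored with the identity on the other qubits *)
Definition embed1 (n : nat) (i : 'I_n) (X : 'M[C]_2) : op n :=
  \matrix_(a, b) if [forall k, (k != i) ==> (cfg a k == cfg b k)]
                 then X (b2o (cfg a i)) (b2o (cfg b i)) else 0.

(* h acts nontrivially only on the qubits of S, i.e. h = X_S (x) I_{[n]\S} *)
Definition acts_only_on (n : nat) (S : {set 'I_n}) (h : op n) : Prop :=
  (forall a b, (exists k, k \notin S /\ cfg a k != cfg b k) -> h a b = 0) /\
  (forall a b a' b',
      (forall k, k \notin S -> cfg a k = cfg b k) ->
      (forall k, k \notin S -> cfg a' k = cfg b' k) ->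
      (forall k, k \in S -> cfg a k = cfg a' k /\ cfg b k = cfg b' k) ->
      h a b = h a' b').

(* A = lmin * Pi + lmax * (I - Pi) is the spectral decomposition of a Hermitian
   2x2 matrix A: Pi is a rank-one orthogonal projector and lmin <= lmax, so that
   lmin = lambda_min(A), lmax = lambda_max(A). *)
Definition spectral_decomp (A Pi : 'M[C]_2) (lmin lmax : R) : Prop :=
  [/\ Pi *m Pi = Pi, is_hermitian Pi, \rank Pi = 1%N, lmin <= lmax &
      A = (lmin%:C)%C *: Pi + (lmax%:C)%C *: (1%:M - Pi)].

Definition spectral_gap (lmin lmax : R) : R := lmax - lmin.

Definition pinch (n : nat) (i : 'I_n) (Pi : 'M[C]_2) (X : op n) : op n :=
  embed1 i Pi *m X *m embed1 i Pi +
  embed1 i (1%:M - Pi) *m X *m embed1 i (1%:M - Pi).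

(* P_i: identity if pin i = false, pinching of R_i (projector Pm i) otherwise *)
Definition Pmap (n : nat) (pin : 'I_n -> bool) (Pm : 'I_n -> 'M[C]_2)
  (i : 'I_n) (X : op n) : op n := if pin i then pinch i (Pm i) X else X.

Definition hprime (n : nat) (pin : 'I_n -> bool) (Pm : 'I_n -> 'M[C]_2)
  (h : 'I_n -> 'I_n -> op n) (i j : 'I_n) : op n :=
  Pmap pin Pm i (Pmap pin Pm j (h i j)).

End QubitDefs.

From HB Require Import structures.
From mathcomp Require Import all_boot all_order all_algebra.
From mathcomp Require Import complex.
From mathcomp Require Import classical_sets reals.
From mathcomp Require Import ring lra.
Import Order.TTheory GRing.Theory Num.Theory.
Local Open Scope ring_scope.

(* Let P be the rank-one projector of R_i on qubit i and Q = 1 - P, so that R_i is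
   lmin P + lmax Q and the pinching is X |-> P X P + Q X Q.  Because P has rank one,
   P X P = P (I_i (x) Tr_i (X P)), and similarly for Q: pinching a term acting on {i, j}
   leaves block factors acting on qubit j alone.  Terms at i with different partners j
   therefore have commuting blocks, so the pinched terms commute; every pinched
   operator commutes with P and Q, hence with R_i.
   For the norm bound, compressing the commutator gives
   P [R_i, X] Q - Q [R_i, X] P = (lmax - lmin) (pinch X - X), and the two pieces have
   orthogonal ranges and inputs, so |pinch X - X| <= |[R_i, X]| / eta_i <= kappa_i / eta_i.
   Pinching is a contraction, and h' - h = P_i (P_j h - h) + (P_i h - h). *)

Set Implicit Arguments. Unset Strict Implicit. Unset Printing Implicit Defensive.

Lemma det_mx22 (K : comPzRingType) (A : 'M[K]_2) :
  \det A = A 0 0 * A 1 1 - A 0 1 * A 1 0.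
Proof.
rewrite (expand_det_row _ 0) !big_ord_recr big_ord0 /= add0r /cofactor !det_mx11 !mxE /=.
have -> : widen_ord (m:=2) (leqnSn 1) ord_max = 0 by apply: val_inj.
have -> : lift (0 : 'I_2) (0 : 'I_1) = 1 by apply: val_inj.
have -> : lift (ord_max : 'I_2) (0 : 'I_1) = 0 by apply: val_inj.
have -> : (ord_max : 'I_2) = 1 by apply: val_inj.
by rewrite expr0 expr1 !mul1r mulN1r mulrN.
Qed.

Section Idempotent.
Variables (K : comPzRingType) (m : nat) (P : 'M[K]_m).
Implicit Type X : 'M[K]_m.
Hypothesis PP : P *m P = P.
Local Notation Q := (1%:M - P).

Definition pinchmx (X : 'M[K]_m) : 'M[K]_m := P *m X *m P + Q *m X *m Q.

Lemma pinchmxB X Y : pinchmx (X - Y) = pinchmx X - pinchmx Y.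
Proof.
rewrite /pinchmx (mulmxBr P) (mulmxBr Q) (mulmxBl (P *m X)) (mulmxBl (Q *m X)).
by rewrite opprD addrACA.
Qed.

Lemma compl_idem : Q *m Q = Q.
Proof. by rewrite mulmxBl !mulmxBr !mul1mx mulmx1 PP subrr subr0. Qed.

Lemma idem_mul_compl : P *m Q = 0.
Proof. by rewrite mulmxBr mulmx1 PP subrr. Qed.

Lemma compl_mul_idem : Q *m P = 0.
Proof. by rewrite mulmxBl mul1mx PP subrr. Qed.

Lemma comm_mx_compl X : comm_mx X P -> comm_mx X Q.
Proof. exact: comm_mxB (comm_mx1 X). Qed.

Lemma mulmx_blockdiag X1 Y1 : comm_mx X1 P -> comm_mx Y1 P -> forall X2 Y2,
  (P *m X1 + Q *m Y1) *m (P *m X2 + Q *m Y2) = P *m (X1 *m X2) + Q *m (Y1 *m Y2).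
Proof.
move=> X1P Y1P X2 Y2; have X1Q := comm_mx_compl X1P; have Y1Q := comm_mx_compl Y1P.
rewrite /comm_mx in X1P Y1P X1Q Y1Q.
rewrite mulmxDl !mulmxDr -!mulmxA (mulmxA X1 P) (mulmxA X1 Q) (mulmxA Y1 P).
rewrite (mulmxA Y1 Q) X1P X1Q Y1P Y1Q !mulmxA PP compl_idem idem_mul_compl.
by rewrite compl_mul_idem !mul0mx addr0 add0r -!mulmxA.
Qed.

Lemma comm_mx_pinchmx_idem X : comm_mx (pinchmx X) P.
Proof.
rewrite /comm_mx /pinchmx; set Q := 1%:M - P.
rewrite mulmxDl mulmxDr -!mulmxA PP compl_mul_idem !mulmx0 addr0.
by rewrite !mulmxA PP idem_mul_compl !mul0mx addr0.
Qed.

Lemma comm_mx_pinchmx X a b : comm_mx (pinchmx X) (a *: P + b *: Q).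
Proof.
have XP := comm_mx_pinchmx_idem X; have XQ := comm_mx_compl XP.
by apply: comm_mxD; rewrite -mul_scalar_mx; apply: comm_mxM => //; apply: comm_mx_scalar.
Qed.

Lemma pinchmx_subE X : pinchmx X - X = - (P *m X *m Q + Q *m X *m P).
Proof.
rewrite /pinchmx; set Q := 1%:M - P.
have dec : X = P *m X *m P + P *m X *m Q + Q *m X *m P + Q *m X *m Q.
  rewrite -{1}(mul1mx X) -{1}(mulmx1 X) -[1%:M](subrK P) -/Q addrC.
  by rewrite mulmxDl !mulmxDr !mulmxA !addrA.
rewrite {3}dec; set a := P *m X *m P; set b := P *m X *m Q.
set c := Q *m X *m P; set d := Q *m X *m Q.
by rewrite -(addrA a b c) [a + _ + d]addrAC opprD addrA subrr add0r.
Qed.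

Section Spectral.
Variables (a b : K).
Local Notation Rs := (a *: P + b *: Q).

Lemma idem_mul_spectral : P *m Rs = a *: P.
Proof. by rewrite mulmxDr -!scalemxAr PP idem_mul_compl scaler0 addr0. Qed.

Lemma spectral_mul_idem : Rs *m P = a *: P.
Proof. by rewrite mulmxDl -!scalemxAl PP compl_mul_idem scaler0 addr0. Qed.

Lemma compl_mul_spectral : Q *m Rs = b *: Q.
Proof. by rewrite mulmxDr -!scalemxAr compl_idem compl_mul_idem scaler0 add0r. Qed.

Lemma spectral_mul_compl : Rs *m Q = b *: Q.
Proof. by rewrite mulmxDl -!scalemxAl compl_idem idem_mul_compl scaler0 add0r. Qed.

Lemma pinchmx_sub_commutator X :
  (b - a) *: (pinchmx X - X) =
  P *m (Rs *m X - X *m Rs) *m Q - Q *m (Rs *m X - X *m Rs) *m P.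
Proof.
rewrite (mulmxBr P) (mulmxBl (P *m _)) (mulmxBr Q) (mulmxBl (Q *m _)).
rewrite !mulmxA idem_mul_spectral compl_mul_spectral -!mulmxA spectral_mul_idem.
rewrite spectral_mul_compl -!scalemxAl -!scalemxAr !mulmxA pinchmx_subE.
by rewrite scalerN scalerDr !scalerBl opprD !opprB addrC.
Qed.

End Spectral.

End Idempotent.

Section Norms.
Variables (R : realType) (m : nat).
Local Notation C := R[i].
Implicit Types (z : C) (u v w : 'cV[C]_m) (A X : 'M[C]_m).

Lemma cabs2 z : cabs z ^+ 2 = complex.Re z ^+ 2 + complex.Im z ^+ 2.
Proof. by rewrite sqr_sqrtr // addr_ge0 // sqr_ge0. Qed.

Lemma cabs_ge0 z : 0 <= cabs z. Proof. exact: sqrtr_ge0. Qed.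

Lemma cabs_normc z : cabs z = Normc.normc z. Proof. by case: z. Qed.

Lemma conjc_mul_cabs z : (z^* * z)%C = (cabs z ^+ 2)%:C%C.
Proof.
rewrite cabs2; case: z => a b /=.
by apply/eqP; rewrite eq_complex /=; apply/andP; split; apply/eqP; ring.
Qed.

Definition vnorm2 v : R := \sum_k cabs (v k 0) ^+ 2.

(* Operator-norm bounds are manipulated in squared form, which avoids square roots. *)
Definition sqbounded A (c : R) : Prop := forall v, vnorm2 (A *m v) <= c * vnorm2 v.

Definition vadj v : 'rV[C]_m := (map_mx (@conjc R) v)^T.

Lemma vnormE v : vnorm v = Num.sqrt (vnorm2 v). Proof. by []. Qed.

Lemma vnorm2_ge0 v : 0 <= vnorm2 v.
Proof. by apply: sumr_ge0 => k _; rewrite sqr_ge0. Qed.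

Lemma vnorm20 : vnorm2 0 = 0.
Proof. by rewrite /vnorm2 big1 // => k _; rewrite mxE cabs_normc Normc.normc0 expr0n. Qed.

Lemma vnorm2_eq0 v : vnorm2 v = 0 -> v = 0.
Proof.
move=> /eqP; rewrite psumr_eq0 => [/allP v0|k _]; last by rewrite sqr_ge0.
apply/matrixP => k l; rewrite (ord1 l) mxE.
move: (v0 k (mem_index_enum k)); rewrite /= sqrf_eq0 => /eqP.
by rewrite cabs_normc => /Normc.eq0_normc.
Qed.

Lemma vnorm2Z (c : R) v : vnorm2 ((c%:C)%C *: v) = c ^+ 2 * vnorm2 v.
Proof.
rewrite /vnorm2 mulr_sumr; apply: eq_bigr => k _; rewrite !mxE !cabs2.
by case: (v k 0) => x y /=; ring.
Qed.

Lemma vnorm2N v : vnorm2 (- v) = vnorm2 v.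
Proof.
by rewrite -scaleN1r -(rmorphN1 (@complex.real_complex R)) vnorm2Z sqrrN expr1n mul1r.
Qed.

Lemma vnorm2D_le u v : vnorm2 (u + v) <= 2%:R * vnorm2 u + 2%:R * vnorm2 v.
Proof.
rewrite /vnorm2 !mulr_sumr -big_split /=; apply: ler_sum => k _.
rewrite !mxE !cabs2 !raddfD /=.
set a := complex.Re _; set b := complex.Re _; set c := complex.Im _; set d := complex.Im _.
rewrite -subr_ge0.
have -> : 2%:R * (a ^+ 2 + c ^+ 2) + 2%:R * (b ^+ 2 + d ^+ 2) -
  ((a + b) ^+ 2 + (c + d) ^+ 2) = (a - b) ^+ 2 + (c - d) ^+ 2 by ring.
by rewrite addr_ge0 ?sqr_ge0.
Qed.

Lemma vnorm2E v : (vadj v *m v) 0 0 = (vnorm2 v)%:C%C.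
Proof.
rewrite mxE /vnorm2 rmorph_sum /=; apply: eq_bigr => k _.
by rewrite !mxE conjc_mul_cabs.
Qed.

Lemma vadj_mul A v : vadj (A *m v) = vadj v *m adjmx A.
Proof. by rewrite /vadj /adjmx map_mxM trmx_mul. Qed.

Lemma vadjD u v : vadj (u + v) = vadj u + vadj v.
Proof. by rewrite /vadj map_mxD linearD. Qed.

Lemma sqboundedW A c c' : c <= c' -> sqbounded A c -> sqbounded A c'.
Proof.
by move=> cc' Ac v; apply: le_trans (Ac v) _; apply: ler_wpM2r; rewrite ?vnorm2_ge0.
Qed.

Lemma sqboundedD A B a b :
  sqbounded A a -> sqbounded B b -> sqbounded (A + B) (2%:R * a + 2%:R * b).
Proof.
move=> Aa Bb v; rewrite mulmxDl mulrDl -!mulrA.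
by apply: le_trans (vnorm2D_le _ _) _; apply: lerD; apply: ler_wpM2l.
Qed.

Lemma sqbounded_unit A c :
  (forall v, vnorm2 v <= 1 -> vnorm2 (A *m v) <= c) -> sqbounded A c.
Proof.
move=> Ac w; have [w0|w_neq0] := eqVneq (vnorm2 w) 0.
  by rewrite (vnorm2_eq0 w0) mulmx0 vnorm20 mulr0.
have w_gt0 : 0 < vnorm2 w by rewrite lt_def w_neq0 vnorm2_ge0.
set t := (vnorm2 w)^-1; have t_gt0 : 0 < t by rewrite invr_gt0.
have := Ac ((Num.sqrt t)%:C%C *: w).
rewrite -scalemxAr !vnorm2Z sqr_sqrtr ?(ltW t_gt0) // mulVf // lexx => /(_ isT).
by move=> Awc; rewrite -(ler_pM2l t_gt0) mulrA mulrAC /t mulVf // mul1r.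
Qed.

Lemma normc_sum (F : 'I_m -> C) :
  Normc.normc (\sum_l F l) <= \sum_l Normc.normc (F l).
Proof.
elim/big_rec2: _ => [|l y1 y2 _ IH]; first by rewrite Normc.normc0.
by apply: le_trans (le_normcD _ _) _; rewrite lerD2l.
Qed.

Lemma cabs_entry_le1 v l : vnorm2 v <= 1 -> cabs (v l 0) <= 1.
Proof.
move=> v1; have : cabs (v l 0) ^+ 2 <= 1.
  apply: le_trans v1; rewrite /vnorm2 (bigD1 l) //= lerDl.
  by apply: sumr_ge0 => k _; rewrite sqr_ge0.
by have := cabs_ge0 (v l 0); set x := cabs _ => x_ge0; nra.
Qed.

(* [ub_le_sup] needs the set defining [opnorm A] to be bounded: entries of a unit
   vector have modulus at most 1, so the row sums of [|A k l|] bound [A *m v]. *)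
Lemma vnorm_le_opnorm A v : vnorm v <= 1 -> vnorm (A *m v) <= opnorm A.
Proof.
move=> v1; apply: ub_le_sup; last by exists v.
exists (Num.sqrt (\sum_k (\sum_l cabs (A k l)) ^+ 2)).
move=> _ [w w1 <-]; rewrite vnormE ler_sqrt; last first.
  by apply: sumr_ge0 => k _; rewrite sqr_ge0.
have {}w1 : vnorm2 w <= 1 by move: w1 => /=; rewrite vnormE -{1}sqrtr1 ler_sqrt.
apply: ler_sum => k _; apply: lerXn2r; rewrite ?nnegrE ?cabs_ge0 //.
  by apply: sumr_ge0 => l _; exact: cabs_ge0.
rewrite mxE cabs_normc; apply: le_trans (normc_sum _) _.
apply: ler_sum => l _; rewrite Normc.normcM -!cabs_normc.
by rewrite -{2}(mulr1 (cabs (A k l))) ler_wpM2l ?cabs_ge0 ?cabs_entry_le1.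
Qed.

Lemma opnorm_sqbounded A c : opnorm A <= c -> sqbounded A (c ^+ 2).
Proof.
move=> Ac; apply: sqbounded_unit => v v1.
have Avc : vnorm (A *m v) <= c.
  by apply: le_trans Ac; apply: vnorm_le_opnorm; rewrite vnormE -sqrtr1 ler_sqrt.
have c_ge0 : 0 <= c := le_trans (sqrtr_ge0 _) Avc.
by rewrite -(sqr_sqrtr (vnorm2_ge0 (A *m v))) lerXn2r ?nnegrE ?sqrtr_ge0.
Qed.

Lemma sqbounded_opnorm A c : 0 <= c -> sqbounded A (c ^+ 2) -> opnorm A <= c.
Proof.
move=> c_ge0 Ac; apply: ge_sup.
  by exists (vnorm (A *m 0)), 0; rewrite //= vnormE vnorm20 sqrtr0.
move=> _ [w w1 <-]; rewrite vnormE -(ger0_norm c_ge0) -sqrtr_sqr ler_sqrt ?sqr_ge0 //.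
apply: le_trans (Ac w) _; rewrite ler_piMr ?sqr_ge0 //.
by move: w1 => /=; rewrite vnormE -{1}sqrtr1 ler_sqrt.
Qed.

Lemma sq_sum_le (a b : R) : 0 <= a -> 0 <= b ->
  2%:R * b ^+ 2 + 2%:R * a ^+ 2 <= (4%:R * (a + b)) ^+ 2.
Proof.
move=> a_ge0 b_ge0; rewrite -subr_ge0.
have -> : (4%:R * (a + b)) ^+ 2 - (2%:R * b ^+ 2 + 2%:R * a ^+ 2) =
  14%:R * a ^+ 2 + 14%:R * b ^+ 2 + 32%:R * (a * b) by ring.
by rewrite !addr_ge0 ?mulr_ge0 ?sqr_ge0 ?ler0n.
Qed.

Lemma sqbounded_scale_inv A (d e c : R) : 0 < e -> e <= d ->
  sqbounded ((d%:C)%C *: A) c -> sqbounded A (c / e ^+ 2).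
Proof.
move=> e_gt0 ed dAc v; have := dAc v; rewrite -scalemxAl vnorm2Z => dAv.
rewrite mulrAC ler_pdivlMr ?exprn_gt0 // mulrC; apply: le_trans dAv.
by apply: ler_wpM2r; [exact: vnorm2_ge0 | nra].
Qed.

Lemma vnorm2_orth (P Q : 'M[C]_m) u w : is_hermitian P -> is_hermitian Q ->
  P *m Q = 0 -> Q *m P = 0 -> vnorm2 (P *m u + Q *m w) = vnorm2 (P *m u) + vnorm2 (Q *m w).
Proof.
move=> Ph Qh PQ QP; apply: (@complexI R).
rewrite rmorphD /= -!vnorm2E vadjD mulmxDl !mulmxDr !vadj_mul Ph Qh.
rewrite -!mulmxA (mulmxA P Q) (mulmxA Q P) PQ QP.
by rewrite !mul0mx !mulmx0 addr0 add0r mxE.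
Qed.

Section HermitianProjection.
Variable P : 'M[C]_m.
Hypotheses (PP : P *m P = P) (Ph : is_hermitian P).
Local Notation Q := (1%:M - P).

Lemma compl_hermitian : is_hermitian Q.
Proof.
rewrite /is_hermitian -{2}Ph; apply/matrixP => a b.
by rewrite /adjmx !mxE rmorphB /= conjc_nat eq_sym.
Qed.

Lemma vnorm2_orth_compl u w :
  vnorm2 (P *m u + Q *m w) = vnorm2 (P *m u) + vnorm2 (Q *m w).
Proof.
by apply: vnorm2_orth; rewrite ?idem_mul_compl ?compl_mul_idem //; apply: compl_hermitian.
Qed.

Lemma vnorm2_split w : vnorm2 w = vnorm2 (P *m w) + vnorm2 (Q *m w).
Proof. by rewrite -vnorm2_orth_compl -mulmxDl addrC subrK mul1mx. Qed.

Lemma vnorm2_proj_le w : vnorm2 (P *m w) <= vnorm2 w.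
Proof. by rewrite [leRHS]vnorm2_split lerDl vnorm2_ge0. Qed.

Lemma vnorm2_compl_le w : vnorm2 (Q *m w) <= vnorm2 w.
Proof. by rewrite [leRHS]vnorm2_split lerDr vnorm2_ge0. Qed.

Lemma sqbounded_pinchmx X c : sqbounded X c -> sqbounded (pinchmx P X) c.
Proof.
move=> Xc w; rewrite /pinchmx (mulmxDl (P *m X *m P)) -!mulmxA vnorm2_orth_compl.
rewrite [in leRHS]vnorm2_split mulrDr.
by apply: lerD; apply: le_trans (Xc _); [apply: vnorm2_proj_le | apply: vnorm2_compl_le].
Qed.

Lemma sqbounded_pinchmx_sub X (a b : C) (c : R) :
  sqbounded (commutator (a *: P + b *: Q) X) c ->
  sqbounded ((b - a) *: (pinchmx P X - X)) c.
Proof.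
move=> Cc w; rewrite pinchmx_sub_commutator // -/(commutator _ X) mulmxBl -!mulmxA.
rewrite -mulmxN vnorm2_orth_compl mulmxN vnorm2N [in leRHS]vnorm2_split mulrDr addrC.
by apply: lerD; apply: le_trans (Cc _); [apply: vnorm2_compl_le | apply: vnorm2_proj_le].
Qed.

End HermitianProjection.

End Norms.

Lemma commutator_eq0 (R : realType) (m : nat) (A B : 'M[R[i]]_m) :
  comm_mx A B -> commutator A B = 0.
Proof. by rewrite /commutator => ->; rewrite subrr. Qed.

Section Qubits.
Variables (R : realType) (n : nat).
Local Notation C := R[i].
Local Notation op := (op R n).
Local Notation cfg := (@cfg n).
Implicit Types (f g : basis n) (i : 'I_n) (S T : {set 'I_n}).

Definition idx (f : basis n) : 'I_(dimq n) := enum_rank f.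

Lemma cfg_idx f : cfg (idx f) = f. Proof. exact: enum_rankK. Qed.
Lemma idx_cfg a : idx (cfg a) = a. Proof. exact: enum_valK. Qed.

Lemma sum_basis (F : 'I_(dimq n) -> C) : \sum_a F a = \sum_(f : basis n) F (idx f).
Proof.
by rewrite (reindex idx) //; exists cfg => x _; [exact: cfg_idx | exact: idx_cfg].
Qed.

Definition set_qubit (f : basis n) (i : 'I_n) (x : bool) : basis n :=
  [ffun k => if k == i then x else f k].

Definition eq_off (i : 'I_n) (f g : basis n) : bool :=
  [forall k, (k != i) ==> (f k == g k)].

Lemma set_qubitE f i x k : set_qubit f i x k = if k == i then x else f k.
Proof. by rewrite ffunE. Qed.

Lemma set_qubit_at f i x : set_qubit f i x i = x.
Proof. by rewrite set_qubitE eqxx. Qed.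

Lemma set_qubitK f i x y : set_qubit (set_qubit f i x) i y = set_qubit f i y.
Proof. by apply/ffunP => k; rewrite !set_qubitE; case: eqP. Qed.

Lemma eq_offP i f g : reflect (forall k, k != i -> f k = g k) (eq_off i f g).
Proof.
apply: (iffP forallP) => H k; last by apply/implyP => /H ->.
by move=> ki; move: (H k); rewrite ki => /eqP.
Qed.

Lemma eq_off_refl i f : eq_off i f f. Proof. exact/eq_offP. Qed.

Lemma eq_offC i f g : eq_off i f g = eq_off i g f.
Proof. by apply/eq_offP/eq_offP => H k /H ->. Qed.

Lemma eq_off_setl i f g x : eq_off i (set_qubit f i x) g = eq_off i f g.
Proof.
by apply/eq_offP/eq_offP => H k ki; move: (H k ki); rewrite set_qubitE (negbTE ki).
Qed.

Lemma eq_off_setr i f g x : eq_off i f (set_qubit g i x) = eq_off i f g.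
Proof. by rewrite eq_offC eq_off_setl eq_offC. Qed.

Lemma eq_off_set i f g : eq_off i f g -> set_qubit f i (g i) = g.
Proof.
move/eq_offP => fg; apply/ffunP => k; rewrite set_qubitE.
by case: eqP => [->//|/eqP /fg].
Qed.

Lemma sum_eq_off i f (G : basis n -> C) :
  (forall g, ~~ eq_off i f g -> G g = 0) ->
  \sum_g G g = \sum_(x : bool) G (set_qubit f i x).
Proof.
move=> G0; rewrite (partition_big (fun g : basis n => g i) predT) //=.
apply: eq_bigr => x _; rewrite (bigD1 (set_qubit f i x)) /= ?set_qubit_at //.
rewrite big1 ?addr0 // => g /andP [/eqP <- gne]; apply: G0.
by apply: contra gne => fg; rewrite eq_off_set.
Qed.

Lemma b2o_inj : injective b2o.
Proof. by case; case => // /(congr1 val); rewrite /= !inordK. Qed.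

Lemma b2oF : b2o false = 0. Proof. by apply: val_inj; rewrite /= inordK. Qed.
Lemma b2oT : b2o true = 1. Proof. by apply: val_inj; rewrite /= inordK. Qed.

Lemma sum_ord2 (F : 'I_2 -> C) : \sum_k F k = \sum_(x : bool) F (b2o x).
Proof.
rewrite big_bool !big_ord_recr big_ord0 /= add0r addrC.
by congr (_ + _); congr F; apply: val_inj; rewrite /= inordK.
Qed.

Lemma embed1E i (X : 'M[C]_2) a b : embed1 i X a b =
  if eq_off i (cfg a) (cfg b) then X (b2o (cfg a i)) (b2o (cfg b i)) else 0.
Proof. by rewrite mxE. Qed.

Lemma mul_embed1_mx i (X : 'M[C]_2) (Z : op) a b :
  (embed1 i X *m Z) a b =
  \sum_(x : bool) X (b2o (cfg a i)) (b2o x) * Z (idx (set_qubit (cfg a) i x)) b.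
Proof.
rewrite mxE sum_basis (@sum_eq_off i (cfg a)) => [|g /negbTE nag]; last first.
  by rewrite embed1E cfg_idx nag mul0r.
by apply: eq_bigr => x _; rewrite embed1E cfg_idx eq_off_setr eq_off_refl set_qubit_at.
Qed.

Lemma mul_mx_embed1 i (X : 'M[C]_2) (Z : op) a b :
  (Z *m embed1 i X) a b =
  \sum_(y : bool) Z a (idx (set_qubit (cfg b) i y)) * X (b2o y) (b2o (cfg b i)).
Proof.
rewrite mxE sum_basis (@sum_eq_off i (cfg b)) => [|g nag]; last first.
  by rewrite embed1E cfg_idx eq_offC (negbTE nag) mulr0.
by apply: eq_bigr => y _; rewrite embed1E cfg_idx eq_off_setl eq_off_refl set_qubit_at.
Qed.

Lemma embed1M i (X Y : 'M[C]_2) : embed1 i X *m embed1 i Y = embed1 i (X *m Y).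
Proof.
apply/matrixP => a b; rewrite mul_embed1_mx embed1E.
under eq_bigr => x _ do rewrite embed1E cfg_idx eq_off_setl set_qubit_at.
case: ifP => _; last by rewrite big1 // => x _; rewrite mulr0.
by rewrite mxE sum_ord2.
Qed.

Lemma embed1_1 i : embed1 i 1%:M = 1%:M :> op.
Proof.
apply/matrixP => a b; rewrite embed1E !mxE.
have -> : (a == b) = eq_off i (cfg a) (cfg b) && (cfg a i == cfg b i).
  apply/eqP/andP => [->|[/eq_offP ab /eqP abi]]; first by rewrite eq_off_refl.
  rewrite -(idx_cfg a) -(idx_cfg b); congr idx; apply/ffunP => k.
  by case: (eqVneq k i) => [->|/ab].
case: eq_off => //=; rewrite (inj_eq b2o_inj).
by case: eqP.
Qed.

Lemma embed1D i (X Y : 'M[C]_2) : embed1 i (X + Y) = embed1 i X + embed1 i Y :> op.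
Proof. by apply/matrixP => a b; rewrite !mxE; case: ifP; rewrite ?addr0 // mxE. Qed.

Lemma embed1Z i c (X : 'M[C]_2) : embed1 i (c *: X) = c *: embed1 i X :> op.
Proof. by apply/matrixP => a b; rewrite !mxE; case: ifP; rewrite ?mulr0 // mxE. Qed.


Lemma embed1_compl i (X : 'M[C]_2) : embed1 i (1%:M - X) = 1%:M - embed1 i X :> op.
Proof. by rewrite embed1D -scaleN1r embed1Z scaleN1r embed1_1. Qed.

Lemma adjmx_embed1 i (X : 'M[C]_2) : adjmx (embed1 i X) = embed1 i (adjmx X) :> op.
Proof.
apply/matrixP => a b; rewrite /adjmx !mxE -!/(eq_off _ _ _) eq_offC.
by case: ifP => _; rewrite ?mxE //= oppr0.
Qed.

Definition agree_out (S : {set 'I_n}) f g := forall k, k \notin S -> f k = g k.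
Definition agree_in (S : {set 'I_n}) f g := forall k, k \in S -> f k = g k.

Lemma acts_only_onI S (Z : op) :
  (forall f g k, k \notin S -> f k != g k -> Z (idx f) (idx g) = 0) ->
  (forall f g f' g', agree_out S f g -> agree_out S f' g' ->
     agree_in S f f' -> agree_in S g g' -> Z (idx f) (idx g) = Z (idx f') (idx g')) ->
  acts_only_on S Z.
Proof.
move=> Z0 Zloc; split=> [a b [k [kS ab]]|a b a' b' ab ab' aa'].
  by rewrite -(idx_cfg a) -(idx_cfg b); apply: (Z0 _ _ k).
rewrite -(idx_cfg a) -(idx_cfg b) -(idx_cfg a') -(idx_cfg b').
by apply: Zloc => // k /aa' [].
Qed.

Lemma acts_only_on_eq0 S (Z : op) f g k : acts_only_on S Z ->
  k \notin S -> f k != g k -> Z (idx f) (idx g) = 0.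
Proof. by case=> Z0 _ kS fg; apply: Z0; exists k; rewrite !cfg_idx. Qed.

Lemma acts_only_on_eq S (Z : op) f g f' g' : acts_only_on S Z ->
  agree_out S f g -> agree_out S f' g' -> agree_in S f f' -> agree_in S g g' ->
  Z (idx f) (idx g) = Z (idx f') (idx g').
Proof.
by case=> _ Zloc fg fg' ff' gg'; apply: Zloc; rewrite ?cfg_idx // => k kS; split; auto.
Qed.

Lemma acts_only_onD S (Z W : op) :
  acts_only_on S Z -> acts_only_on S W -> acts_only_on S (Z + W).
Proof.
move=> HZ HW; apply: acts_only_onI => [f g k kS fg|f g f' g' fg fg' ff' gg'].
  by rewrite mxE (acts_only_on_eq0 HZ kS fg) (acts_only_on_eq0 HW kS fg) addr0.
by rewrite !mxE (acts_only_on_eq HZ fg fg' ff' gg') (acts_only_on_eq HW fg fg' ff' gg').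
Qed.

Lemma acts_only_on_embed1 S i (X : 'M[C]_2) : i \in S -> acts_only_on S (embed1 i X).
Proof.
move=> iS; apply: acts_only_onI => [f g k kS fg|f g f' g' fg fg' ff' gg'].
  rewrite embed1E !cfg_idx; case: eq_offP => // fgi.
  by move: fg; rewrite fgi ?eqxx //; apply: contraNneq kS => ->.
rewrite !embed1E !cfg_idx (ff' i iS) (gg' i iS).
suff -> : eq_off i f g = eq_off i f' g' by [].
apply/eq_offP/eq_offP => H k ki; case: (boolP (k \in S)) => kS.
- by rewrite -(ff' k kS) -(gg' k kS); apply: H.
- exact: fg'.
- by rewrite (ff' k kS) (gg' k kS); apply: H.
- exact: fg.
Qed.

Lemma embed1_sandwichE j (X Y : 'M[C]_2) (Z : op) f g :
  (embed1 j X *m Z *m embed1 j Y) (idx f) (idx g) =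
  \sum_(y : bool) \sum_(x : bool) X (b2o (f j)) (b2o x) *
     Z (idx (set_qubit f j x)) (idx (set_qubit g j y)) * Y (b2o y) (b2o (g j)).
Proof.
rewrite mul_mx_embed1; apply: eq_bigr => y _.
by rewrite mul_embed1_mx mulr_suml !cfg_idx.
Qed.

Lemma agree_out_set S j f g x y : j \in S ->
  agree_out S f g -> agree_out S (set_qubit f j x) (set_qubit g j y).
Proof.
move=> jS fg k kS; rewrite !set_qubitE; case: eqP => [kj|_]; last exact: fg.
by move: kS; rewrite kj jS.
Qed.

Lemma agree_in_set S j f g x : agree_in S f g -> agree_in S (set_qubit f j x) (set_qubit g j x).
Proof. by move=> fg k kS; rewrite !set_qubitE; case: eqP => // _; apply: fg. Qed.

Lemma acts_only_on_sandwich S j (X Y : 'M[C]_2) (Z : op) : j \in S ->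
  acts_only_on S Z -> acts_only_on S (embed1 j X *m Z *m embed1 j Y).
Proof.
move=> jS HZ; apply: acts_only_onI => [f g k kS fg|f g f' g' fg fg' ff' gg'].
  rewrite embed1_sandwichE big1 // => y _; rewrite big1 // => x _.
  have kj : k != j by apply: contraNneq kS => ->.
  by rewrite (acts_only_on_eq0 HZ kS) ?mulr0 ?mul0r // !set_qubitE (negbTE kj).
rewrite !embed1_sandwichE (ff' j jS) (gg' j jS).
apply: eq_bigr => y _; apply: eq_bigr => x _; congr (_ * _ * _).
by apply: (acts_only_on_eq HZ); (apply: agree_out_set || apply: agree_in_set).
Qed.

Definition splice (S : {set 'I_n}) f g : basis n :=
  [ffun k => if k \in S then g k else f k].

Lemma mulmx_disjoint_supportE S T (A B : op) f g :
  acts_only_on S A -> acts_only_on T B -> [disjoint S & T] ->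
  (A *m B) (idx f) (idx g) =
  A (idx f) (idx (splice S f g)) * B (idx (splice S f g)) (idx g).
Proof.
move=> HA HB ST; rewrite mxE sum_basis (bigD1 (splice S f g)) //= big1 ?addr0 // => e.
move=> /eqP ne; have [k ek] : exists k, e k != splice S f g k.
  apply/existsP; rewrite -negb_forall; apply/negP => /forallP eqk.
  by apply: ne; apply/ffunP => k; apply/eqP.
move: ek; rewrite ffunE; case: ifP => kS ek.
  by rewrite (acts_only_on_eq0 HB _ ek) ?mulr0 // (disjointFr ST kS).
by rewrite (acts_only_on_eq0 HA (k := k)) ?mul0r ?kS // eq_sym.
Qed.

Lemma comm_mx_disjoint_support S T (A B : op) :
  acts_only_on S A -> acts_only_on T B -> [disjoint S & T] -> comm_mx A B.
Proof.
move=> HA HB ST; apply/matrixP => a b.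
rewrite -(idx_cfg a) -(idx_cfg b); move: (cfg a) (cfg b) => f g.
rewrite (mulmx_disjoint_supportE f g HA HB ST).
rewrite (mulmx_disjoint_supportE f g HB HA) 1?disjoint_sym //.
set c := splice S f g; set d := splice T f g.
case: (boolP [exists k, [&& k \notin S, k \notin T & f k != g k]]).
  case/existsP=> k /and3P [kS kT fg].
  rewrite (acts_only_on_eq0 HB (k := k) kT) ?mulr0; last by rewrite ffunE (negbTE kS).
  by rewrite (acts_only_on_eq0 HA (k := k) kS) ?mulr0 // ffunE (negbTE kT).
move=> off; have {}off k : k \notin S -> k \notin T -> f k = g k.
  move=> kS kT; apply/eqP; apply: contraNT off => fg; apply/existsP; exists k.
  by rewrite kS kT fg.
rewrite mulrC; congr (_ * _).
  apply: (acts_only_on_eq HB) => k kT; rewrite !ffunE ?(negbTE kT) ?kT //.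
  - by case: ifP => kS //; rewrite off ?kS.
  - by case: ifP => kS //; rewrite (disjointFr ST kS) in kT.
apply: (acts_only_on_eq HA) => k kS; rewrite !ffunE ?(negbTE kS) ?kS //.
- by case: ifP => kT //; rewrite off ?kT.
- by case: ifP => kT //; rewrite (disjointFr ST kS) in kT.
Qed.


Lemma det0_swap (pi : 'M[C]_2) : \det pi = 0 -> forall u x y v,
  pi (b2o u) (b2o x) * pi (b2o y) (b2o v) = pi (b2o y) (b2o x) * pi (b2o u) (b2o v).
Proof.
move=> /eqP; rewrite det_mx22 subr_eq0 -b2oF -b2oT => /eqP hdet.
by case; case; case; case => //;
  first [ by rewrite mulrC | by rewrite hdet mulrC | by rewrite mulrC hdet
        | by rewrite -hdet mulrC | by rewrite mulrC -hdet | by rewrite hdet | by rewrite -hdet].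
Qed.

(* [pcontract i pi Z] is [I_i (x) Tr_i (Z (pi_i (x) I))]. *)
Definition pcontract_coef i (pi : 'M[C]_2) (Z : op) f g : C :=
  \sum_(y : bool) \sum_(x : bool)
    pi (b2o y) (b2o x) * Z (idx (set_qubit f i x)) (idx (set_qubit g i y)).

Definition pcontract i (pi : 'M[C]_2) (Z : op) : op :=
  \matrix_(a, b) ((cfg a i == cfg b i)%:R * pcontract_coef i pi Z (cfg a) (cfg b)).

Lemma pcontract_coef_setl i pi Z f g x :
  pcontract_coef i pi Z (set_qubit f i x) g = pcontract_coef i pi Z f g.
Proof. by rewrite /pcontract_coef; under eq_bigr do under eq_bigr do rewrite set_qubitK. Qed.

Lemma acts_only_on_pcontract S i pi (Z : op) : i \in S ->
  acts_only_on S Z -> acts_only_on (S :\ i) (pcontract i pi Z).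
Proof.
move=> iS HZ; apply: acts_only_onI => [f g k kS fg|f g f' g' fg fg' ff' gg'].
  rewrite mxE !cfg_idx; have [ki|ki] := eqVneq k i; first by rewrite -ki (negbTE fg) mul0r.
  have {}kS : k \notin S by move: kS; rewrite in_setD1 ki.
  rewrite /pcontract_coef big1 ?mulr0 // => y _; rewrite big1 // => x _.
  by rewrite (acts_only_on_eq0 HZ kS) ?mulr0 // !set_qubitE (negbTE ki).
have iSi : i \notin S :\ i by rewrite in_setD1 eqxx.
rewrite !mxE !cfg_idx (fg i iSi) (fg' i iSi) !eqxx; congr (_ * _).
apply: eq_bigr => y _; apply: eq_bigr => x _; congr (_ * _).
apply: (acts_only_on_eq HZ).
- apply: agree_out_set => // k kS.
  by apply: fg; rewrite in_setD1 (negbTE kS) andbF.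
- apply: agree_out_set => // k kS.
  by apply: fg'; rewrite in_setD1 (negbTE kS) andbF.
- by move=> k kS; rewrite !set_qubitE; case: eqP => // /eqP ki; apply: ff'; rewrite in_setD1 ki.
- by move=> k kS; rewrite !set_qubitE; case: eqP => // /eqP ki; apply: gg'; rewrite in_setD1 ki.
Qed.

Lemma sandwich_rank1 i (pi : 'M[C]_2) (Z : op) : \det pi = 0 ->
  embed1 i pi *m Z *m embed1 i pi = embed1 i pi *m pcontract i pi Z.
Proof.
move=> det0; apply/matrixP => a b.
rewrite -(idx_cfg a) -(idx_cfg b); move: (cfg a) (cfg b) => f g.
rewrite embed1_sandwichE mul_embed1_mx cfg_idx.
rewrite [RHS](bigD1 (g i)) //= [X in _ + X]big1 ?addr0; last first.
  by move=> x /negbTE xg; rewrite mxE !cfg_idx set_qubit_at xg mul0r mulr0.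
rewrite mxE !cfg_idx set_qubit_at eqxx mul1r pcontract_coef_setl mulr_sumr.
apply: eq_bigr => y _; rewrite mulr_sumr; apply: eq_bigr => x _.
by rewrite mulrAC det0_swap // mulrCA mulrA.
Qed.

End Qubits.

Section Pinching.
Variables (R : realType) (n : nat).
Local Notation C := R[i].
Local Notation op := (op R n).
Implicit Types (i : 'I_n) (S T U : {set 'I_n}) (Pi Q : 'M[C]_2) (X : op).

Lemma pinchE i Pi X : pinch i Pi X = pinchmx (embed1 i Pi) X.
Proof. by rewrite /pinch embed1_compl. Qed.

Lemma pinchB i Pi X Y : pinch i Pi (X - Y) = pinch i Pi X - pinch i Pi Y.
Proof. by rewrite !pinchE pinchmxB. Qed.

Lemma embed1_idem i Pi : Pi *m Pi = Pi -> embed1 i Pi *m embed1 i Pi = embed1 i Pi.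
Proof. by move=> PiPi; rewrite embed1M PiPi. Qed.

Lemma embed1_spectral i Pi a b :
  embed1 i (a *: Pi + b *: (1%:M - Pi)) = a *: embed1 i Pi + b *: (1%:M - embed1 i Pi).
Proof. by rewrite embed1D !embed1Z embed1_compl. Qed.

Lemma acts_only_on_pinch S i Pi X :
  i \in S -> acts_only_on S X -> acts_only_on S (pinch i Pi X).
Proof. by move=> iS HX; apply: acts_only_onD; apply: acts_only_on_sandwich. Qed.

Lemma det_rank1_idem Pi : Pi *m Pi = Pi -> \rank Pi = 1%N ->
  \det Pi = 0 /\ \det (1%:M - Pi) = 0.
Proof.
move=> PiPi rk1; suff det0 M : M *m Pi = 0 \/ M = Pi -> \det M = 0.
  by split; apply: det0; [right | left; apply: compl_mul_idem].
move=> MPi; apply/eqP; rewrite -[_ == 0]negbK -unitfE -unitmxE; apply/negP => Munit.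
case: MPi => [MPi|MPi]; last by move: rk1; rewrite -MPi (mxrank_unit Munit).
have Pi0 : Pi = 0 by rewrite -(mulKmx Munit Pi) MPi mulmx0.
by move: rk1; rewrite Pi0 mxrank0.
Qed.

Lemma comm_mx_pinch S T i Pi A B : Pi *m Pi = Pi -> \rank Pi = 1%N ->
  i \in S -> i \in T -> acts_only_on S A -> acts_only_on T B ->
  [disjoint S :\ i & T :\ i] -> comm_mx (pinch i Pi A) (pinch i Pi B).
Proof.
move=> PiPi rk1 iS iT HA HB ST; have [detP detQ] := det_rank1_idem PiPi rk1.
set P := embed1 i Pi; have PP : P *m P = P := embed1_idem i PiPi.
have blocks U X : i \in U -> acts_only_on U X -> pinch i Pi X =
    P *m pcontract i Pi X + (1%:M - P) *m pcontract i (1%:M - Pi) X.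
  by move=> iU HX; rewrite /pinch (sandwich_rank1 _ _ detP) (sandwich_rank1 _ _ detQ) embed1_compl.
have commP U X : acts_only_on (U :\ i) X -> comm_mx X P.
  move=> HX; apply: comm_mx_disjoint_support HX (acts_only_on_embed1 _ (set11 i)) _.
  by rewrite disjoint_sym disjoints1 in_setD1 eqxx.
have cA Q := commP _ _ (acts_only_on_pcontract Q iS HA).
have cB Q := commP _ _ (acts_only_on_pcontract Q iT HB).
have cAB Q := comm_mx_disjoint_support
  (acts_only_on_pcontract Q iS HA) (acts_only_on_pcontract Q iT HB) ST.
rewrite /comm_mx (blocks S A iS HA) (blocks T B iT HB).
rewrite (mulmx_blockdiag PP (cA Pi) (cA (1%:M - Pi))).
by rewrite (mulmx_blockdiag PP (cB Pi) (cB (1%:M - Pi))) cAB cAB.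
Qed.

Lemma comm_mx_pinch_spectral i Pi a b X : Pi *m Pi = Pi ->
  comm_mx (pinch i Pi X) (embed1 i (a *: Pi + b *: (1%:M - Pi))).
Proof. by move=> PiPi; rewrite pinchE embed1_spectral; apply/comm_mx_pinchmx/embed1_idem. Qed.

Section HermitianPinching.
Variables (i : 'I_n) (Pi : 'M[C]_2).
Hypotheses (PiPi : Pi *m Pi = Pi) (Pih : is_hermitian Pi).

Lemma embed1_hermitian : is_hermitian (embed1 i Pi : op).
Proof. by rewrite /is_hermitian adjmx_embed1 Pih. Qed.

Lemma sqbounded_pinch X c : sqbounded X c -> sqbounded (pinch i Pi X) c.
Proof. by rewrite pinchE; apply/sqbounded_pinchmx/embed1_hermitian/embed1_idem. Qed.

Lemma sqbounded_pinch_sub X (l1 l2 eta kappa : R) : 0 < eta -> eta <= l2 - l1 ->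
  opnorm (commutator (embed1 i ((l1%:C)%C *: Pi + (l2%:C)%C *: (1%:M - Pi))) X) <= kappa ->
  sqbounded (pinch i Pi X - X) ((kappa / eta) ^+ 2).
Proof.
move=> eta_gt0 gap RX; rewrite expr_div_n; apply: sqbounded_scale_inv eta_gt0 gap _.
rewrite rmorphB /= pinchE; apply: sqbounded_pinchmx_sub; rewrite ?embed1_idem //.
  exact: embed1_hermitian.
by rewrite -embed1_spectral; apply: opnorm_sqbounded.
Qed.

End HermitianPinching.

Section Pmap.
Variables (pin : 'I_n -> bool) (Pm : 'I_n -> 'M[C]_2).

Lemma Pmap_pinch i X : pin i -> Pmap pin Pm i X = pinch i (Pm i) X.
Proof. by rewrite /Pmap => ->. Qed.

Lemma PmapB i X Y : Pmap pin Pm i (X - Y) = Pmap pin Pm i X - Pmap pin Pm i Y.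
Proof. by rewrite /Pmap; case: (pin i); rewrite ?pinchB. Qed.

Lemma acts_only_on_Pmap S i X :
  i \in S -> acts_only_on S X -> acts_only_on S (Pmap pin Pm i X).
Proof. by rewrite /Pmap; case: (pin i) => // iS; apply: acts_only_on_pinch. Qed.

Lemma sqbounded_Pmap i X c : (pin i -> Pm i *m Pm i = Pm i /\ is_hermitian (Pm i)) ->
  sqbounded X c -> sqbounded (Pmap pin Pm i X) c.
Proof. by rewrite /Pmap; case: (pin i) => // /(_ isT) [PiPi Pih]; apply: sqbounded_pinch. Qed.

Lemma sqbounded_Pmap_sub i X (Rm : 'M[C]_2) (l1 l2 eta kappa : R) : 0 < eta ->
  (pin i -> [/\ spectral_decomp Rm (Pm i) l1 l2, eta <= spectral_gap l1 l2
              & opnorm (commutator (embed1 i Rm) X) <= kappa]) ->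
  sqbounded (Pmap pin Pm i X - X) ((kappa / eta) ^+ 2).
Proof.
rewrite /Pmap; case: (pin i) => [eta_gt0 /(_ isT) [[PiPi Pih _ _ ->] gap RX]|_ _ w].
  exact (sqbounded_pinch_sub PiPi Pih eta_gt0 gap RX).
by rewrite subrr mul0mx vnorm20 mulr_ge0 ?sqr_ge0 ?vnorm2_ge0.
Qed.

End Pmap.

End Pinching.

Theorem lemma5p2 (R : realType) (n : nat)
  (E : rel 'I_n) (h : 'I_n -> 'I_n -> op R n)
  (eta kappa : 'I_n -> R)
  (pin : 'I_n -> bool) (Rm Pm : 'I_n -> 'M[R[i]]_2) (lmin lmax : 'I_n -> R) :
  (* E is a set of unordered pairs {i,j}, i <> j, with one term h_{ij} each *)
  (forall i j, E i j = E j i) ->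
  (forall i, ~~ E i i) ->
  (forall i j, E i j -> h i j = h j i) ->
  (forall i j, E i j -> is_hermitian (h i j) /\ acts_only_on (i |: [set j])%SET (h i j)) ->
  (forall i, 0 < eta i) ->
  (forall i, 0 <= kappa i) ->
  (forall i, pin i ->
     [/\ spectral_decomp (Rm i) (Pm i) (lmin i) (lmax i),
         eta i <= spectral_gap (lmin i) (lmax i) &
         forall j, E i j ->
           opnorm (commutator (embed1 i (Rm i)) (h i j)) <= kappa i]) ->
  (forall i, pin i -> forall j k, E i j -> E i k ->
     commutator (hprime pin Pm h i j) (hprime pin Pm h i k) = 0 /\
     commutator (hprime pin Pm h i j) (embed1 i (Rm i)) = 0) /\
  (forall i j, E i j ->
     opnorm (hprime pin Pm h i j - h i j)
       <= 4%:R * (kappa i / eta i + kappa j / eta j)).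
Proof.
move=> Esym Eirr hsym hloc eta_gt0 kappa_ge0 hR.
have loc_Pmap i j : E i j -> acts_only_on (i |: [set j]) (Pmap pin Pm j (h i j)).
  by move=> Eij; apply: acts_only_on_Pmap (hloc i j Eij).2; rewrite setU1r ?set11.
have neq_of_edge i j : E i j -> j != i.
  by move=> Eij; apply/eqP => ji; move: (Eirr i); rewrite -{2}ji Eij.
split=> [i pin_i j k Eij Eik|i j Eij].
  have [[PiPi _ rk1 _ ->] _ _] := hR i pin_i.
  rewrite /hprime !(Pmap_pinch _ _ pin_i); split; apply: commutator_eq0.
    have [<-//|jk] := eqVneq j k.
    apply: comm_mx_pinch (loc_Pmap i j Eij) (loc_Pmap i k Eik) _; rewrite ?setU11 //.
    rewrite !setU1K ?disjoints1 ?inE // eq_sym;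
      by [exact: neq_of_edge Eik | exact: neq_of_edge Eij].
  exact: comm_mx_pinch_spectral.
have bound u v : E u v -> sqbounded (Pmap pin Pm u (h u v) - h u v) ((kappa u / eta u) ^+ 2).
  move=> Euv; apply: (sqbounded_Pmap_sub (Rm := Rm u) (eta_gt0 u)).
  by move=> /hR [decomp gap RX]; exact: And3 decomp gap (RX v Euv).
have bound_j := bound j i; rewrite Esym -(hsym _ _ Eij) in bound_j.
have -> : hprime pin Pm h i j - h i j =
    Pmap pin Pm i (Pmap pin Pm j (h i j) - h i j) + (Pmap pin Pm i (h i j) - h i j).
  by rewrite PmapB addrA subrK.
apply: sqbounded_opnorm.
  by rewrite mulr_ge0 ?addr_ge0 ?divr_ge0 ?kappa_ge0 ?ltW ?eta_gt0.
apply: sqboundedW (sqboundedD _ (bound i j Eij)); last first.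
  by apply: sqbounded_Pmap (bound_j Eij) => /hR [[PiPi Pih _ _ _] _ _].
by rewrite sq_sum_le ?divr_ge0 ?kappa_ge0 ?ltW ?eta_gt0.
Qed.
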